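(* Let $T$ be a tree. Two elements $\mathfrak p,\mathfrak p'\in\mathfrak P_T$ satisfy $\mathfrak p\ge\mathfrak p'$ if and only if $\mathsf L_T(\mathfrak p')$ intersects the closure of $\mathsf L_T(\mathfrak p)$ in $\mathsf L_T$. If this holds, then $\mathsf L_T(\mathfrak p')$ is contained in the closure of $\mathsf L_T(\mathfrak p)$.
   Context: A tree is a nonempty finite connected acyclic graph with vertex set $V(T)$ and edge set $E(T)$ (two-element subsets of $V(T)$). Subgraphs are full (vertex-induced); a subtree is a subgraph which is a tree. A quotient tree $S\twoheadrightarrow R$ is a tree $R$ with a surjection $V(S)\to V(R)$ whose fibers are vertex sets of subtrees, vertices of $R$ adjacent iff an edge of $S$ joins their fibers. Arboreal singularity: for $\alpha\in V(T)$ let $\mathsf L_T(\alpha)=\mathbb R^{V(T)\setminus\{\alpha\}}$ with coordinates $x_\gamma(\alpha)$; $\mathsf L_T$ is the quotient of $\coprod_\alpha\mathsf L_T(\alpha)$ by the equivalence relation generated by identifying, for each edge $\{\alpha,\beta\}$, $\{x_\gamma(\alpha)\}\sim\{x_\gamma(\beta)\}$ whenever $x_\beta(\alpha)=x_\alpha(\beta)\ge0$ and $x_\gamma(\alpha)=x_\gamma(\beta)$ for $\gamma\ne\alpha,\beta$; each $\mathsf L_T(\alpha)$ is regarded as a subspace of $\mathsf L_T$. For $x\in\mathsf L_T$: $S_x$ is the full subgraph on $\{\alpha:x\in\mathsf L_T(\alpha)\}$, and $R_x$ is the quotient of $S_x$ contracting exactly the edges $\{\alpha,\beta\}\in E(S_x)$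 with $x_\beta(\alpha)=x_\alpha(\beta)>0$ at $x$. Poset $\mathfrak P_T$: elements are correspondences $\mathfrak p=(R\overset{q}{\twoheadleftarrow}S\overset{i}{\hookrightarrow}T)$, $i$ inclusion of a subtree, $q$ a quotient of trees (equivalently a subtree $S$ with a partition of $S$ into subtrees). Composition: for $\mathfrak q=(P\twoheadleftarrow Q\hookrightarrow R)$, $\mathfrak q\circ\mathfrak p=(P\twoheadleftarrow Q\times_RS\hookrightarrow T)$, where $Q\times_RS$ is the subtree of $S$ on vertices mapping into $Q$, included in $T$ via $S$ and mapped to $P$ via $Q$. Order: $\mathfrak p\ge\mathfrak p'$ iff $\mathfrak p=\mathfrak q\circ\mathfrak p'$ for some correspondence $\mathfrak q$ of the same kind. $\mathsf L_T(\mathfrak p)=\{x:(R_x\twoheadleftarrow S_x\hookrightarrow T)=\mathfrak p\}$. *)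

From HB Require Import structures.
From mathcomp Require Import all_boot all_order all_algebra.
From mathcomp Require Import reals.
From Stdlib Require Import Relations.Relation_Operators.
Set Implicit Arguments. Unset Strict Implicit. Unset Printing Implicit Defensive.
Import Order.TTheory GRing.Theory Num.Theory.
Local Open Scope ring_scope.

Section Defs.
Variable V : finType.
Variable e : rel V.

Definition induced (S : {set V}) : rel V :=
  [rel x y | [&& e x y, x \in S & y \in S]].

(* S spans a subtree: nonempty and its full subgraph is connected
   (acyclicity is inherited from the ambient tree). *)
Definition subtree (S : {set V}) : Prop :=
  S != set0 /\ forall x y, x \in S -> y \in S -> connect (induced S) x y.

(* A correspondence R <<- S ->> T, encoded as a subtree S together with a
   partition P of S into subtrees (the fibers of S ->> R). *)
Definition is_corr (S : {set V}) (P : {set {set V}}) : Prop :=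
  [/\ subtree S, partition P S & forall B, B \in P -> subtree B].
End Defs.

Definition is_tree (T : finType) (E : rel T) : Prop :=
  [/\ (0 < #|T|)%N, symmetric E, irreflexive E,
      (forall x y, connect E x y) &
      (forall c : seq T, uniq c -> (2 < size c)%N -> ~~ cycle E c)].

(* Vertices of the quotient tree of (S', P') are the blocks of P' : {set {set T}};
   two distinct blocks are adjacent iff an edge of T joins them. *)
Definition quot_adj (T : finType) (E : rel T) (P : {set {set T}}) : rel {set T} :=
  [rel B C | [&& B \in P, C \in P, B != C &
              [exists x in B, exists y in C, E x y]]].

(* p = (S,P) >= p' = (S',P') iff p = q o p' for some correspondence
   q = (Pq <<- Q ->> R') on the quotient tree R' of p'. The composite is the
   subtree  Q x_R' S' = cover Q  of T, with partition given by the fibers of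
   the map to Pq, i.e. { cover pi | pi in Pi }. *)
Definition corr_ge (T : finType) (E : rel T)
    (S : {set T}) (P : {set {set T}}) (S' : {set T}) (P' : {set {set T}}) : Prop :=
  exists (Q : {set {set T}}) (Pi : {set {set {set T}}}),
    [/\ Q \subset P', is_corr (quot_adj E P') Q Pi,
        S = cover Q & P = [set cover pi | pi in Pi]].

Section Arboreal.
Variable R : realType.
Variable T : finType.
Variable E : rel T.

(* A point of the disjoint union  coprod_alpha L_T(alpha)  is a pair (alpha, v)
   with v : T -> R and the normalisation v alpha = 0, so that v encodes the
   coordinates x_gamma(alpha), gamma <> alpha, i.e. a point of R^(V(T)\{alpha}). *)
Definition prept := (T * (T -> R))%type.
Definition valid (p : prept) : Prop := p.2 p.1 = 0.

Definition glue (p q : prept) : Prop :=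
  [/\ E p.1 q.1, valid p, valid q,
      p.2 q.1 = q.2 p.1 /\ 0 <= p.2 q.1 &
      forall g, g != p.1 -> g != q.1 -> p.2 g = q.2 g].

(* the equivalence relation generated; L_T is the quotient by it *)
Definition Leq : prept -> prept -> Prop := clos_refl_sym_trans prept glue.

(* Quotient topology: U (a set of points of the disjoint union) is open in L_T
   iff it is saturated and each preimage in L_T(alpha) = R^(V\{alpha}) is open. *)
Definition Lopen (U : prept -> Prop) : Prop :=
  (forall p q, Leq p q -> U p -> U q) /\
  (forall a (v : T -> R), v a = 0 -> U (a, v) ->
     exists2 eps : R, 0 < eps &
       forall w : T -> R, w a = 0 -> (forall g, `|w g - v g| < eps) -> U (a, w)).

(* closure in L_T of a saturated set A *)
Definition Lclosure (A : prept -> Prop) (x : prept) : Prop :=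
  valid x /\ forall U, Lopen U -> U x -> exists y, [/\ valid y, U y & A y].

Definition inL (x : prept) (a : T) : Prop :=
  exists v : T -> R, valid (a, v) /\ Leq (a, v) x.

Definition contracted (x : prept) (a b : T) : Prop :=
  [/\ E a b, inL x a, inL x b &
      exists v w : T -> R, [/\ valid (a, v) /\ valid (b, w), Leq (a, v) x,
                                Leq (b, w) x, v b = w a & 0 < v b]].

(* L_T(p) for p = (S,P):  S_x = S  and the fibers of S_x ->> R_x
   (the classes of the equivalence generated by contracted edges) are
   exactly the blocks of P. *)
Definition stratum (S : {set T}) (P : {set {set T}}) (x : prept) : Prop :=
  [/\ valid x,
      (forall a, a \in S <-> inL x a) &
      (forall a b, a \in S -> b \in S ->
         ((exists2 B, B \in P & (a \in B) && (b \in B)) <->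
          clos_refl_sym_trans T (contracted x) a b))].
End Arboreal.

Arguments stratum R {T} E S P x.
Arguments Lclosure {R T} E A x.

(* Every point x of L_T has a well-defined coordinate x_gh along each edge {g, h} of T,
   whatever chart L_T(alpha) it is read in.  The charts containing x form the subtree
   reached from any one of them through the edges with x_gh >= 0, and the contracted
   edges are those with x_gh > 0.  Hence L_T(p), for p = (S, P), is cut out by sign
   conditions: x_gh > 0 on edges inside a block of P, x_gh = 0 on edges between blocks,
   x_gh < 0 on edges leaving S.  The closure of L_T(p) relaxes these to weak
   inequalities, and a small perturbation of the chart coordinates turns any point
   satisfying the weak ones into a point of L_T(p).  So L_T(p') meets the closure of
   L_T(p) iff some, equivalently every, point of L_T(p') satisfies the weak conditions,
   i.e. iff S is a union of P'-blocks of S' on which P is coarser than P'; and this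
   is p >= p', witnessed by the P'-blocks inside S grouped along the blocks of P. *)

From HB Require Import structures.
From mathcomp Require Import all_boot all_order all_algebra.
From mathcomp Require Import reals lra.
From Stdlib Require Import Relations.Relation_Operators.

Set Implicit Arguments. Unset Strict Implicit. Unset Printing Implicit Defensive.
Import Order.TTheory GRing.Theory Num.Theory.
Local Open Scope ring_scope.

Section Connect.
Variable T : finType.

Lemma connect_preserves (r : rel T) (A : T -> Prop) x y :
  (forall u v, r u v -> A u -> A v) -> connect r x y -> A x -> A y.
Proof.
move=> rA /connectP [p pth ->]; elim: p x pth => [|z p IH] x //= /andP [rxz pth] Ax.
exact: IH pth (rA _ _ rxz Ax).
Qed.

Lemma connect_clos_rst (r : rel T) (r' : T -> T -> Prop) x y :
  (forall u v, r u v -> r' u v) -> connect r x y -> clos_refl_sym_trans T r' x y.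
Proof.
move=> rr' /connectP [p pth ->]; elim: p x pth => [|z p IH] x /=.
  by move=> _; apply: rst_refl.
by case/andP=> rxz pth; apply: rst_trans (IH _ pth); apply/rst_step/rr'.
Qed.

Lemma clos_rst_connect (r : T -> T -> Prop) (r' : rel T) x y :
  symmetric r' -> (forall u v, r u v -> r' u v) ->
  clos_refl_sym_trans T r x y -> connect r' x y.
Proof.
move=> r'sym rr'; elim=> [u v /rr' /connect1|u|u v _|u v w _ uv _ vw] //.
- by rewrite (sym_connect_sym r'sym).
- exact: connect_trans uv vw.
Qed.

Lemma connect_map (U : finType) (r : rel T) (r' : rel U) (f : T -> U) x y :
  (forall u v, r u v -> f u = f v \/ r' (f u) (f v)) ->
  connect r x y -> connect r' (f x) (f y).
Proof.
move=> rr' xy; apply: (connect_preserves (A := fun z => connect r' (f x) (f z))) xy _.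
  by move=> u v /rr' [<- //|r'uv] xu; apply: connect_trans xu (connect1 r'uv).
exact: connect0.
Qed.

Definition avoid (r : rel T) (g : T) : rel T :=
  [rel u v | [&& r u v, u != g & v != g]].

Lemma connect_avoid (r : rel T) g x y :
  connect r x y -> connect r g y \/ connect (avoid r g) x y.
Proof.
move=> /connectP [p pth ->]; elim: p x pth => [|z p IH] x /=.
  by move=> _; right; apply: connect0.
case/andP=> rxz pth; have [xg|xg] := eqVneq x g.
  by left; rewrite -xg; apply/connectP; exists (z :: p) => //=; rewrite rxz.
have [zg|zg] := eqVneq z g.
  by left; rewrite -zg; apply/connectP; exists p.
case: (IH z pth) => [|zy]; first by left.
by right; apply: connect_trans zy; apply: connect1; rewrite /avoid /= rxz xg zg.
Qed.

End Connect.

Lemma same_blockP (T : finType) (P : {set {set T}}) (S : {set T}) a b :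
  partition P S -> a \in S -> b \in S ->
  (exists2 B, B \in P & (a \in B) && (b \in B)) <-> pblock P a = pblock P b.
Proof.
case/and3P=> /eqP coverP trivP _ aS bS; split=> [[B BP /andP [aB bB]]|eqab].
  by rewrite (def_pblock trivP BP aB) (def_pblock trivP BP bB).
exists (pblock P a); first by rewrite pblock_mem ?coverP.
by rewrite mem_pblock eqab mem_pblock coverP aS bS.
Qed.

Lemma uniform_radius (R : realDomainType) (I : finType) (Q : I -> R -> Prop) :
  (forall i d d', 0 < d' -> d' <= d -> Q i d -> Q i d') ->
  (forall i, exists2 d, 0 < d & Q i d) -> exists2 d, 0 < d & forall i, Q i d.
Proof.
move=> Qdown Qex.
suff [d d_gt0 Qd] : exists2 d, 0 < d & forall i, i \in enum I -> Q i d.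
  by exists d => // i; apply: Qd; rewrite mem_enum.
elim: (enum I) => [|j s [d d_gt0 Qd]]; first by exists 1.
have [dj dj_gt0 Qj] := Qex j.
have m_gt0 : 0 < Num.min d dj by rewrite lt_min d_gt0 dj_gt0.
exists (Num.min d dj) => // i; rewrite inE => /orP [/eqP ->|i_s].
  by apply: Qdown Qj; rewrite // ge_min lexx orbT.
by apply: Qdown (Qd _ i_s); rewrite // ge_min lexx.
Qed.

Section Correspondences.
Variables (T : finType) (E : rel T).

Section BlocksIn.
Variables (S' : {set T}) (P' : {set {set T}}).
Hypothesis partP' : partition P' S'.

Let coverP' : cover P' = S'. Proof. by case/and3P: partP' => /eqP. Qed.
Let trivP' : trivIset P'. Proof. by case/and3P: partP'. Qed.
Let nonemptyP' : set0 \notin P'. Proof. by case/and3P: partP'. Qed.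

Definition blocks_in (C : {set T}) : {set {set T}} := [set B in P' | B \subset C].

Lemma blocks_inP C B : B \in blocks_in C -> exists2 z, z \in C & B = pblock P' z.
Proof.
rewrite inE => /andP [BP' /subsetP BC].
have /set0Pn [z zB] : B != set0 by apply: contraNneq nonemptyP' => <-.
by exists z; [apply: BC | rewrite (def_pblock trivP' BP' zB)].
Qed.

Variable C : {set T}.
Hypotheses (CS' : C \subset S') (satC : {in C, forall z, pblock P' z \subset C}).

Lemma pblock_blocks_in z : z \in C -> pblock P' z \in blocks_in C.
Proof.
by move=> zC; rewrite inE satC // pblock_mem // coverP' (subsetP CS').
Qed.

Lemma cover_blocks_in : cover (blocks_in C) = C.
Proof.
apply/setP=> z; apply/bigcupP/idP=> [[B]|zC].
  by rewrite inE => /andP [_ /subsetP BC] /BC.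
by exists (pblock P' z); rewrite ?pblock_blocks_in // mem_pblock coverP' (subsetP CS').
Qed.

Lemma subtree_blocks_in : subtree E C -> subtree (quot_adj E P') (blocks_in C).
Proof.
case=> /set0Pn [z0 z0C] connC; split.
  by apply/set0Pn; exists (pblock P' z0); apply: pblock_blocks_in.
move=> _ _ /blocks_inP [z1 z1C ->] /blocks_inP [z2 z2C ->].
apply: connect_map (connC _ _ z1C z2C) => u v /and3P [Euv uC vC].
have [|neq] := eqVneq (pblock P' u) (pblock P' v); [by left | right].
have uS' := subsetP CS' _ uC; have vS' := subsetP CS' _ vC.
rewrite /induced /= !pblock_blocks_in //= /quot_adj /= neq !pblock_mem ?coverP' //= andbT.
by apply/existsP; exists u; rewrite mem_pblock coverP' uS' /=;
  apply/existsP; exists v; rewrite mem_pblock coverP' vS' Euv.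
Qed.

End BlocksIn.

(* [corr_ge] read off edge by edge, the form in which closures of strata see it. *)
Definition corr_ge_local (S : {set T}) (P : {set {set T}})
    (S' : {set T}) (P' : {set {set T}}) : Prop :=
  {subset S <= S'} /\
  forall a b, E a b -> a \in S -> b \in S' -> pblock P' a = pblock P' b ->
    b \in S /\ pblock P a = pblock P b.

Lemma corr_ge_local_of_ge S P S' P' :
  is_corr E S P -> is_corr E S' P' -> corr_ge E S P S' P' -> corr_ge_local S P S' P'.
Proof.
move=> hp hp' [Q [Pi [/subsetP QP' [_ /and3P [/eqP coverPi _ _] _] eS eP]]].
subst S P.
move: hp hp' => [_ /and3P [/eqP coverP trivP _] _] [_ /and3P [/eqP coverP' trivP' _] _].
have SS' : {subset cover Q <= S'}.
  by move=> a /bigcupP [B BQ aB]; rewrite -coverP'; apply/bigcupP; exists B => //; apply: QP'.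
split=> // a b _ aS bS' eqab.
have BQ : pblock P' a \in Q.
  by case/bigcupP: aS => B BQ aB; rewrite (def_pblock trivP' (QP' _ BQ) aB).
split; first by apply/bigcupP; exists (pblock P' a); rewrite // eqab mem_pblock coverP'.
have /bigcupP [pi piPi Bpi] : pblock P' a \in cover Pi by rewrite coverPi.
have cpiP : cover pi \in [set cover pi | pi in Pi] by apply: imset_f.
have in_cpi z : z \in S' -> pblock P' z = pblock P' a -> z \in cover pi.
  by move=> zS' eqz; apply/bigcupP; exists (pblock P' a); rewrite // -eqz mem_pblock coverP'.
rewrite (def_pblock trivP cpiP (in_cpi a (SS' _ aS) erefl)).
by rewrite (def_pblock trivP cpiP (in_cpi b bS' (esym eqab))).
Qed.

Section FromLocal.
Variables (S : {set T}) (P : {set {set T}}) (S' : {set T}) (P' : {set {set T}}).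
Hypotheses (hp : is_corr E S P) (hp' : is_corr E S' P').
Hypothesis loc : corr_ge_local S P S' P'.

Let partP : partition P S. Proof. by case: hp. Qed.
Let partP' : partition P' S'. Proof. by case: hp'. Qed.
Let coverP : cover P = S. Proof. by case/and3P: partP => /eqP. Qed.
Let coverP' : cover P' = S'. Proof. by case/and3P: partP' => /eqP. Qed.
Let trivP : trivIset P. Proof. by case/and3P: partP. Qed.
Let trivP' : trivIset P'. Proof. by case/and3P: partP'. Qed.
Let nonemptyP : set0 \notin P. Proof. by case/and3P: partP. Qed.
Let SS' : {subset S <= S'}. Proof. by case: loc. Qed.

Lemma corr_ge_local_pblock z0 z :
  z0 \in S -> z \in pblock P' z0 -> z \in S /\ pblock P z = pblock P z0.
Proof.
move=> z0S zB; have z0S' := SS' z0S.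
have BP' : pblock P' z0 \in P' by rewrite pblock_mem ?coverP'.
have z0B : z0 \in pblock P' z0 by rewrite mem_pblock coverP'.
have [_ _ /(_ _ BP') [_ connB]] := hp'.
apply: (connect_preserves (A := fun u => u \in S /\ pblock P u = pblock P z0))
  (connB _ _ z0B zB) _ => // u v /and3P [Euv uB vB] [uS <-].
have vS' : v \in S' by rewrite -coverP'; apply/bigcupP; exists (pblock P' z0).
case: loc => _ /(_ u v Euv uS vS').
by rewrite (def_pblock trivP' BP' uB) (def_pblock trivP' BP' vB) => /(_ erefl) [vS ->].
Qed.

Lemma corr_ge_of_local : corr_ge E S P S' P'.
Proof.
have CS C : C \in P -> C \subset S by move=> CP; rewrite -coverP; apply: bigcup_sup.
have SsubS' : S \subset S' by apply/subsetP => z /SS'.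
have CS' C : C \in P -> C \subset S' by move=> CP; apply: subset_trans (CS _ CP) SsubS'.
have satS : {in S, forall z, pblock P' z \subset S}.
  by move=> z zS; apply/subsetP=> u /(corr_ge_local_pblock zS) [].
have satP C : C \in P -> {in C, forall z, pblock P' z \subset C}.
  move=> CP z zC; apply/subsetP=> u /(corr_ge_local_pblock (subsetP (CS _ CP) _ zC)).
  by case=> uS equ; rewrite -(def_pblock trivP CP zC) -equ mem_pblock coverP.
have [subS _ subP] := hp.
exists (blocks_in P' S), [set blocks_in P' C | C in P]; split.
- by apply/subsetP=> B; rewrite inE => /andP [].
- split; first exact: (subtree_blocks_in partP' SsubS' satS subS).
    apply/and3P; split.
    + apply/eqP/setP=> B; apply/bigcupP/idP=> [[_ /imsetP [C CP ->]]|BS].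
        rewrite !inE => /andP [BP' BC].
        by rewrite BP' (subset_trans BC (CS _ CP)).
      have [z zS ->] := blocks_inP partP' BS.
      have CP : pblock P z \in P by rewrite pblock_mem ?coverP.
      exists (blocks_in P' (pblock P z)); first exact: imset_f.
      apply: (pblock_blocks_in partP'); [exact: CS' | exact: satP |].
      by rewrite mem_pblock coverP.
    + apply/trivIsetP=> _ _ /imsetP [C1 C1P ->] /imsetP [C2 C2P ->].
      apply: contraNT; rewrite -setI_eq0 => /set0Pn [B].
      rewrite inE => /andP [/(blocks_inP partP') [z zC1 ->]].
      rewrite inE => /andP [_ /subsetP /(_ z) zC2].
      have zS' := subsetP (CS' _ C1P) _ zC1.
      apply/eqP; congr blocks_in.
      rewrite -(def_pblock trivP C1P zC1) (def_pblock trivP C2P (zC2 _)) //.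
      by rewrite mem_pblock coverP'.
    + apply/negP=> /imsetP [C CP eC].
      have /set0Pn [z zC] : C != set0 by apply: contraNneq nonemptyP => <-.
      by have := pblock_blocks_in partP' (CS' _ CP) (satP _ CP) zC; rewrite -eC inE.
  move=> _ /imsetP [C CP ->].
  by apply: (subtree_blocks_in partP'); [exact: CS' | exact: satP | exact: subP].
- by rewrite (cover_blocks_in partP').
- rewrite -imset_comp (eq_in_imset (g := id)) ?imset_id // => C CP /=.
  by rewrite (cover_blocks_in partP') //; [exact: CS' | exact: satP].
Qed.

End FromLocal.

Lemma corr_geP S P S' P' : is_corr E S P -> is_corr E S' P' ->
  corr_ge E S P S' P' <-> corr_ge_local S P S' P'.
Proof.
move=> hp hp'; split; first exact: corr_ge_local_of_ge.
exact: corr_ge_of_local.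
Qed.

End Correspondences.

Section Tree.
Variables (T : finType) (E : rel T).
Hypothesis tree : is_tree E.

Let Esym : symmetric E. Proof. by case: tree. Qed.
Let Eirr : irreflexive E. Proof. by case: tree. Qed.
Let Econn : forall x y, connect E x y. Proof. by case: tree. Qed.
Let Eacyc : forall c : seq T, uniq c -> (2 < size c)%N -> ~~ cycle E c.
Proof. by case: tree. Qed.

Lemma edge_neq g h : E g h -> g != h.
Proof. by apply: contraTneq => ->; rewrite Eirr. Qed.

Definition cut_edge (g h : T) : rel T :=
  [rel x y | E x y && ~~ ((x == g) && (y == h) || (x == h) && (y == g))].

Lemma cut_edge_sym g h : symmetric (cut_edge g h).
Proof.
move=> x y; rewrite /cut_edge /= Esym; congr (_ && ~~ _).
by rewrite orbC; congr (_ || _); rewrite andbC.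
Qed.

Lemma cut_edgeC g h : cut_edge g h =2 cut_edge h g.
Proof. by move=> x y; rewrite /cut_edge /= orbC. Qed.

Lemma cut_edge_disconnects g h : E g h -> ~~ connect (cut_edge g h) g h.
Proof.
move=> Egh; apply/negP => /connectP [p pth hp].
case: (shortenP pth) hp => p' pth' up' _ hp'.
case: p' pth' up' hp' => [|z [|z' q]] /=.
- by move=> _ _ hg; move: Egh; rewrite hg Eirr.
- by move=> /andP [/andP [_ cut] _] _ hz; move: cut; rewrite -hz !eqxx.
move=> pth' up' hp'; have /negP := Eacyc (c := [:: g, z, z' & q]) up' isT; apply.
rewrite /cycle rcons_path; apply/andP; split; last by rewrite /= -hp' Esym.
have : path (cut_edge g h) g [:: z, z' & q] := pth'.
by apply: sub_path => x y /andP [].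
Qed.

Lemma cut_edge_sides g h a :
  E g h -> connect (cut_edge g h) a g || connect (cut_edge g h) a h.
Proof.
move=> Egh; have csym := sym_connect_sym (cut_edge_sym g h).
pose side z := connect (cut_edge g h) z g || connect (cut_edge g h) z h.
suff : side g -> side a by apply; rewrite /side connect0.
apply: (connect_preserves (A := side)) (Econn g a) => u v Euv.
case cuv : (cut_edge g h u v).
  have vu : connect (cut_edge g h) v u by rewrite csym; apply: connect1.
  by case/orP=> ug; apply/orP; [left|right]; apply: connect_trans vu ug.
move: cuv; rewrite /cut_edge /= Euv /= => /negbFE /orP [] /andP [/eqP -> /eqP ->];
  by rewrite /side !connect0 ?orbT.
Qed.

Lemma cut_edge_side_excl g h a :
  E g h -> connect (cut_edge g h) a h -> ~~ connect (cut_edge g h) a g.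
Proof.
move=> Egh ah; apply: contra (cut_edge_disconnects Egh) => ag.
by apply: connect_trans ah; rewrite (sym_connect_sym (cut_edge_sym g h)).
Qed.

Lemma cut_edge_neighbor_uniq g h1 h2 a : E g h1 -> E g h2 ->
  connect (cut_edge g h1) a h1 -> connect (cut_edge g h2) a h2 -> h1 = h2.
Proof.
move=> E1 E2 ah1 ah2; apply/eqP/negPn/negP => h12.
case: (connect_avoid g ah2) => [gh2|ah2'].
  by move: (cut_edge_disconnects E2); rewrite gh2.
have ah2'' : connect (cut_edge g h1) a h2.
  apply: connect_sub ah2' => u v /and3P [/andP [Euv _] ug vg]; apply: connect1.
  by rewrite /cut_edge /= Euv (negbTE ug) (negbTE vg) !andbF.
have ag : connect (cut_edge g h1) a g.
  apply: connect_trans ah2'' (connect1 _); rewrite /cut_edge /= Esym E2 /=.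
  by rewrite (eq_sym h2 g) (negbTE (edge_neq E2)) (eq_sym h2 h1) (negbTE h12).
by move: (cut_edge_side_excl E1 ah1); rewrite ag.
Qed.

Lemma connect_edge (r : rel T) a b :
  subrel r E -> E a b -> connect r a b -> r a b || r b a.
Proof.
move=> rE Eab; apply: contraTT => /norP [rab rba].
apply: contra (cut_edge_disconnects Eab); apply: connect_sub => u v ruv.
apply: connect1; rewrite /cut_edge /= (rE _ _ ruv) /=.
by apply/norP; split; [apply: contraNN rab | apply: contraNN rba] => /andP [/eqP <- /eqP <-].
Qed.

Section Arboreal.
Variable R : realType.
Notation point := (prept R T).
Implicit Types (x y p q : point) (v w : T -> R).

(* Read in a chart on [h]'s side of the edge, this is the coordinate of [g]. *)
Definition edge_coord x g h : R :=
  if connect (cut_edge g h) x.1 h then x.2 g else x.2 h.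

Lemma edge_coordC x g h : E g h -> edge_coord x g h = edge_coord x h g.
Proof.
move=> Egh; rewrite /edge_coord -(eq_connect (cut_edgeC g h)).
case: ifP => [xh|/negbT xNh]; first by rewrite (negbTE (cut_edge_side_excl Egh xh)).
by move: (cut_edge_sides x.1 Egh); rewrite (negbTE xNh) orbF => ->.
Qed.

Lemma edge_coord_chart a v b : E a b -> edge_coord (a, v) a b = v b.
Proof. by move=> Eab; rewrite /edge_coord /= (negbTE (cut_edge_disconnects Eab)). Qed.

Lemma glue_edge_coord p q g h : glue E p q -> E g h -> edge_coord p g h = edge_coord q g h.
Proof.
case: p q => [a v] [b w] [/= Eab _ _ [vw _] vwE] Egh.
have csym := sym_connect_sym (cut_edge_sym g h).
have [/orP [] /andP [/eqP -> /eqP ->]|not_ab] :=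
  boolP ((g == a) && (h == b) || (g == b) && (h == a)).
- by rewrite !edge_coord_chart // /edge_coord /= connect0.
- have Eba : E b a by rewrite Esym.
  by rewrite edge_coordC // !edge_coord_chart.
have cut_ab : cut_edge g h a b.
  rewrite /cut_edge /= Eab /=; apply: contra not_ab => /orP [] /andP [/eqP -> /eqP ->];
  by rewrite !eqxx ?orbT.
have same_side z : connect (cut_edge g h) a z = connect (cut_edge g h) b z.
  apply/idP/idP => [|bz]; last exact: connect_trans (connect1 cut_ab) bz.
  by apply: connect_trans; rewrite csym; apply: connect1.
rewrite /edge_coord /= -same_side; case: ifP => ah; apply: vwE; apply/eqP => e.
- by move: (cut_edge_side_excl Egh ah); rewrite e connect0.
- by move: (cut_edge_side_excl Egh ah); rewrite same_side e connect0.
- by move: ah; rewrite -e connect0.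
- by move: ah; rewrite same_side -e connect0.
Qed.

Lemma Leq_edge_coord p q g h : Leq E p q -> E g h -> edge_coord p g h = edge_coord q g h.
Proof.
move=> pq Egh; elim: pq => [{}p {}q pq|//|{}p {}q _ ->|{}p {}q r _ -> _ ->] //.
exact: glue_edge_coord pq Egh.
Qed.

Lemma Leq_sym p q : Leq E p q -> Leq E q p.
Proof. exact: rst_sym. Qed.

Lemma Leq_trans p q r : Leq E p q -> Leq E q r -> Leq E p r.
Proof. exact: rst_trans. Qed.

Lemma Leq_valid p q : Leq E p q -> valid p <-> valid q.
Proof.
move=> pq; elim: pq => [? ? [_ ? ? _ _]|//|? ? _|? ? ? _ pq _ qr]; first by [].
- exact: iff_sym.
- exact: iff_trans pq qr.
Qed.

Definition nonneg_edge x : rel T := [rel g h | E g h && (0 <= edge_coord x g h)].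

Lemma nonneg_edge_sub x : subrel (nonneg_edge x) E.
Proof. by move=> g h /andP []. Qed.

Lemma nonneg_edge_sym x : symmetric (nonneg_edge x).
Proof.
move=> g h; rewrite /nonneg_edge /= Esym.
by case Ehg: (E h g); rewrite //= edge_coordC // Esym.
Qed.

Lemma Leq_connect p q : Leq E p q -> connect (nonneg_edge p) p.1 q.1.
Proof.
have same_nonneg p' q' : Leq E p' q' -> nonneg_edge p' =2 nonneg_edge q'.
  move=> pq g h; rewrite /nonneg_edge /=.
  by case Egh: (E g h); rewrite //= (Leq_edge_coord pq).
elim=> [[a v] [b w] [/= Eab _ _ [_ vb] _]|?|{}p {}q pq qp|{}p {}q r pq pq' _ qr'].
- by apply: connect1; rewrite /nonneg_edge /= Eab edge_coord_chart.
- exact: connect0.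
- by rewrite -(eq_connect (same_nonneg _ _ pq)) (sym_connect_sym (nonneg_edge_sym p)).
- by apply: connect_trans pq' _; rewrite (eq_connect (same_nonneg _ _ pq)).
Qed.

Lemma inL_self x : valid x -> inL E x x.1.
Proof. by case: x => a v vx; exists v; split=> //; apply: rst_refl. Qed.

Lemma inL_edge x g h : inL E x g -> E g h -> 0 <= edge_coord x g h -> inL E x h.
Proof.
move=> [v [vg gx]] Egh; rewrite -(Leq_edge_coord gx Egh) edge_coord_chart // => vh_ge0.
have gNh : (g == h) = false by apply/negbTE/edge_neq.
exists (fun k => if k == h then 0 else if k == g then v h else v k).
split; first by rewrite /valid /= eqxx.
apply: Leq_trans gx; apply/Leq_sym/rst_step; split=> //=; first by rewrite /valid /= eqxx.
  by rewrite gNh eqxx.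
by move=> k /negbTE -> /negbTE ->.
Qed.

Lemma inLP x a : valid x -> inL E x a <-> connect (nonneg_edge x) x.1 a.
Proof.
move=> vx; split=> [[v [_ ax]]|xa]; first exact: Leq_connect (Leq_sym ax).
apply: (connect_preserves (A := inL E x)) xa (inL_self vx) => u v /andP [Euv uv] xu.
exact: inL_edge xu Euv uv.
Qed.

Lemma edge_coord_ge0 x a b : inL E x a -> inL E x b -> E a b -> 0 <= edge_coord x a b.
Proof.
move=> [v [_ ax]] [w [_ bx]] Eab; rewrite -(Leq_edge_coord ax Eab).
have := Leq_connect (Leq_trans ax (Leq_sym bx)).
move=> /(connect_edge (@nonneg_edge_sub (a, v)) Eab) /orP [] /andP [_] //.
by rewrite edge_coordC // Esym.
Qed.

Lemma contractedE x a b :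
  contracted E x a b <-> [/\ E a b, inL E x a, inL E x b & 0 < edge_coord x a b].
Proof.
split=> [[Eab xa xb [v [w [_ ax _ _ vb]]]]|[Eab xa xb ab_gt0]].
  by split=> //; rewrite -(Leq_edge_coord ax Eab) edge_coord_chart.
split=> //; case: (xa) => v [va ax]; case: (xb) => w [wb bx].
have Eba : E b a by rewrite Esym.
exists v, w; rewrite -(edge_coord_chart v Eab) (Leq_edge_coord ax Eab); split=> //.
by rewrite -(edge_coord_chart w Eba) (Leq_edge_coord bx Eba) edge_coordC.
Qed.

Lemma rst_contracted_gt0 x a b :
  E a b -> clos_refl_sym_trans T (contracted E x) a b -> 0 < edge_coord x a b.
Proof.
pose pos := [rel g h | E g h && (0 < edge_coord x g h)].
have pos_sym : symmetric pos.
  by move=> g h; rewrite /pos /= Esym; case Ehg: (E h g); rewrite //= edge_coordC // Esym.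
have pos_sub : subrel pos E by move=> g h /andP [].
move=> Eab ab; have {}ab : connect pos a b.
  by apply: clos_rst_connect pos_sym _ ab => u v /contractedE [Euv _ _ uv]; rewrite /= Euv.
case/orP: (connect_edge pos_sub Eab ab) => /andP [_] //.
by rewrite edge_coordC // Esym.
Qed.

Lemma stratum_pblock S P x a b : partition P S -> stratum R E S P x -> a \in S -> b \in S ->
  pblock P a = pblock P b <-> clos_refl_sym_trans T (contracted E x) a b.
Proof.
by move=> partP [_ _ blocks] aS bS; rewrite -(same_blockP partP aS bS) blocks.
Qed.

(* A point of L_T(a) whose edge coordinates are [c]: each [g] gets [c g h], where [h] is
   its neighbour on the side of [a]. *)
Definition chart_of (a : T) (c : T -> T -> R) : T -> R :=
  fun g => if [pick h | E g h && connect (cut_edge g h) a h] is Some h then c g h else 0.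

Lemma chart_of_root a c : chart_of a c a = 0.
Proof.
rewrite /chart_of; case: pickP => // h /andP [Eah ah].
by move: (cut_edge_disconnects Eah); rewrite ah.
Qed.

Lemma chart_of_le1 a c g : (forall g h, `|c g h| <= 1) -> `|chart_of a c g| <= 1.
Proof. by move=> c_le1; rewrite /chart_of; case: pickP; rewrite ?normr0. Qed.

Lemma edge_coord_chart_of a c g h : (forall g h, c g h = c h g) -> E g h ->
  edge_coord (a, chart_of a c) g h = c g h.
Proof.
move=> cC Egh; rewrite /edge_coord /chart_of /=; case: ifP => [ah|/negbT aNh].
  case: pickP => [h' /andP [Egh' ah']|/(_ h)]; last by rewrite Egh ah.
  by rewrite (cut_edge_neighbor_uniq Egh' Egh ah' ah).
have Ehg : E h g by rewrite Esym.
have ag : connect (cut_edge h g) a g.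
  rewrite -(eq_connect (cut_edgeC g h)).
  by move: (cut_edge_sides a Egh); rewrite (negbTE aNh) orbF.
case: pickP => [g' /andP [Ehg' ag']|/(_ g)]; last by rewrite Ehg ag.
by rewrite (cut_edge_neighbor_uniq Ehg' Ehg ag' ag) cC.
Qed.

Lemma edge_coord_lincomb a v w (d : R) g h :
  edge_coord (a, fun k => v k + d * w k) g h =
  edge_coord (a, v) g h + d * edge_coord (a, w) g h.
Proof. by rewrite /edge_coord /=; case: ifP. Qed.

(* The signs of the edge coordinates on L_T(S, P). *)
Definition corr_sign (S : {set T}) (P : {set {set T}}) g h : R :=
  if (g \in S) && (h \in S) then (if pblock P g == pblock P h then 1 else 0)
  else if (g \in S) || (h \in S) then -1 else 0.

Lemma corr_signC S P g h : corr_sign S P g h = corr_sign S P h g.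
Proof. by rewrite /corr_sign andbC orbC eq_sym. Qed.

Lemma corr_sign_le1 S P g h : `|corr_sign S P g h| <= 1.
Proof. by rewrite /corr_sign; do 2!case: ifP; rewrite ?normrN ?normr1 ?normr0. Qed.

Lemma stratum_of_signs S P y : is_corr E S P -> valid y -> y.1 \in S ->
  (forall g h, E g h -> g \in S -> h \in S -> pblock P g = pblock P h ->
     0 < edge_coord y g h) ->
  (forall g h, E g h -> g \in S -> h \in S -> pblock P g != pblock P h ->
     edge_coord y g h = 0) ->
  (forall g h, E g h -> g \in S -> h \notin S -> edge_coord y g h < 0) ->
  stratum R E S P y.
Proof.
move=> [[_ connS] partP blocks] vy yS inside across outward.
have /and3P [/eqP coverP trivP _] := partP.
have inS a : a \in S -> inL E y a.
  move=> aS; apply/inLP=> //; apply: connect_sub (connS _ _ yS aS) => u v /and3P [Euv uS vS].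
  apply: connect1; rewrite /nonneg_edge /= Euv /=.
  have [eq_uv|neq_uv] := eqVneq (pblock P u) (pblock P v).
    exact/ltW/inside.
  by rewrite across.
have Sin a : inL E y a -> a \in S.
  move/inLP => /(_ vy) ya; apply: (connect_preserves (A := fun z => z \in S)) ya yS.
  move=> u v /andP [Euv uv] uS; apply: contraLR uv => vS.
  by rewrite -ltNge outward.
split=> // [a|a b aS bS]; first by split; [exact: inS | exact: Sin].
rewrite (same_blockP partP aS bS); split=> [eq_ab|].
  have BP : pblock P a \in P by rewrite pblock_mem ?coverP.
  have [_ connB] := blocks _ BP.
  have aB : a \in pblock P a by rewrite mem_pblock coverP.
  have bB : b \in pblock P a by rewrite eq_ab mem_pblock coverP.
  apply: connect_clos_rst (connB _ _ aB bB) => u v /and3P [Euv uB vB].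
  have BS : pblock P a \subset S by rewrite -coverP; apply: (bigcup_sup _ BP).
  have uS := subsetP BS _ uB; have vS := subsetP BS _ vB.
  apply/contractedE; split; [by []|exact: inS|exact: inS|apply: inside => //].
  by rewrite (def_pblock trivP BP uB) (def_pblock trivP BP vB).
elim=> [u v /contractedE [Euv /Sin uS /Sin vS uv]|//|u v _ ->//|u v w _ -> _ ->//].
apply/eqP; apply: contraTT uv => neq_uv.
by rewrite (across _ _ Euv uS vS neq_uv) ltxx.
Qed.

Lemma stratum_exists S P : is_corr E S P -> exists x, stratum R E S P x.
Proof.
move=> hp; have [[/set0Pn [a aS] _] _ _] := hp.
exists (a, chart_of a (corr_sign S P)).
have coord g h : E g h -> edge_coord (a, chart_of a (corr_sign S P)) g h = corr_sign S P g h.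
  exact/edge_coord_chart_of/corr_signC.
have vx : valid (a, chart_of a (corr_sign S P)) := chart_of_root _ _.
apply: (stratum_of_signs hp vx aS) => g h Egh gS hS;
  rewrite coord // /corr_sign gS /=.
- by move=> ->; rewrite hS eqxx ltr01.
- by move=> /negbTE ->; rewrite hS.
- by rewrite (negbTE hS) ltrN10.
Qed.

Lemma closure_of_weak_signs S P x a : is_corr E S P -> valid x -> a \in S -> inL E x a ->
  (forall g h, E g h -> g \in S -> h \in S -> pblock P g = pblock P h ->
     0 <= edge_coord x g h) ->
  (forall g h, E g h -> g \in S -> h \in S -> pblock P g != pblock P h ->
     edge_coord x g h = 0) ->
  (forall g h, E g h -> g \in S -> h \notin S -> edge_coord x g h <= 0) ->
  Lclosure E (stratum R E S P) x.
Proof.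
move=> hp vx aS [v [va ax]] inside across outward; split=> // U [Usat Uopen] Ux.
have [eps eps_gt0 ball] := Uopen a v va (Usat _ _ (Leq_sym ax) Ux).
pose d := eps / 2; have d_gt0 : 0 < d by rewrite divr_gt0.
pose w := chart_of a (corr_sign S P).
pose y := (a, fun k => v k + d * w k).
have vy : valid y by rewrite /valid /y /w /= chart_of_root mulr0 addr0; exact: va.
have coord_y g h : E g h -> edge_coord y g h = edge_coord x g h + d * corr_sign S P g h.
  move=> Egh; rewrite edge_coord_lincomb (Leq_edge_coord ax Egh).
  by rewrite edge_coord_chart_of //; apply: corr_signC.
have d_lt_eps : d < eps by rewrite ltr_pdivrMr // ltr_pMr // ltr1n.
have w_le1 k : `|w k| <= 1 by apply: chart_of_le1 => g h; apply: corr_sign_le1.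
exists y; split=> //.
  apply: ball => // k; rewrite addrC addKr normrM (gtr0_norm d_gt0).
  by apply: (le_lt_trans _ d_lt_eps); rewrite -[leRHS]mulr1 ler_pM2l.
apply: (stratum_of_signs hp vy aS) => g h Egh gS hS; rewrite coord_y // /corr_sign gS /=.
- by move=> eq_gh; rewrite hS eq_gh eqxx mulr1 ltr_wpDl // inside.
- by move=> neq_gh; rewrite hS (negbTE neq_gh) mulr0 addr0 across.
- by rewrite (negbTE hS) mulrN1 subr_lt0 (le_lt_trans (outward _ _ Egh gS hS)).
Qed.

Lemma sign_stable_nbhd x : valid x ->
  exists2 U, Lopen E U & U x /\ forall y, U y ->
    (forall a, inL E y a -> inL E x a) /\
    (forall a b, E a b -> 0 < edge_coord x a b -> 0 < edge_coord y a b).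
Proof.
move=> vx.
have [eps eps_gt0 coord_ge] : exists2 eps : R, 0 < eps & forall gh : T * T,
    edge_coord x gh.1 gh.2 != 0 -> eps <= `|edge_coord x gh.1 gh.2|.
  apply: uniform_radius => [[g h] d d' _ /= d'd le_d ne0|[g h] /=].
    exact: le_trans d'd (le_d ne0).
  have [->|ne0] := eqVneq (edge_coord x g h) 0; first by exists 1.
  by exists `|edge_coord x g h|; rewrite ?normr_gt0.
(* Within [eps] of [x] an edge coordinate can only change sign if it vanishes at [x]. *)
pose near p := forall g h, E g h -> `|edge_coord p g h - edge_coord x g h| < eps.
have near_ge0 p g h : near p -> E g h -> 0 <= edge_coord p g h -> 0 <= edge_coord x g h.
  move=> np Egh p_ge0; rewrite leNgt; apply/negP => x_lt0.
  have := coord_ge (g, h) (ltr0_neq0 x_lt0); rewrite /= ltr0_norm // => eps_le.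
  have := ltr_distlDr (np _ _ Egh); lra.
have near_gt0 p g h : near p -> E g h -> 0 < edge_coord x g h -> 0 < edge_coord p g h.
  move=> np Egh x_gt0.
  have := coord_ge (g, h) (lt0r_neq0 x_gt0); rewrite /= gtr0_norm // => eps_le.
  have := ltr_distlCBl (np _ _ Egh); lra.
pose U p := [/\ valid p, inL E x p.1 & near p].
have Usat p q : Leq E p q -> U p -> U q.
  move=> pq [vp xp np]; split; first exact/(Leq_valid pq).
    apply: (connect_preserves (A := inL E x)) (Leq_connect pq) xp => u z /andP [Euz uz] xu.
    exact: inL_edge xu Euz (near_ge0 _ _ _ np Euz uz).
  by move=> g h Egh; rewrite -(Leq_edge_coord pq Egh); apply: np.
exists U; last first.
  split; first by split=> //; [exact: inL_self|move=> g h _; rewrite subrr normr0].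
  move=> y Uy; split=> [a [w [wa ay]]|a b Eab]; last by case: Uy => _ _ /near_gt0; apply.
  by case: (Usat _ _ (Leq_sym ay) Uy).
split=> // a v va [_ xa nv].
have [eta eta_gt0 slack] : exists2 eta : R, 0 < eta & forall gh : T * T, E gh.1 gh.2 ->
    `|edge_coord (a, v) gh.1 gh.2 - edge_coord x gh.1 gh.2| + eta <= eps.
  apply: uniform_radius => [[g h] d d' _ /= d'd le_d Egh|[g h] /=].
    by apply: le_trans (le_d Egh); rewrite lerD2l.
  case Egh: (E g h); last by exists 1.
  exists (eps - `|edge_coord (a, v) g h - edge_coord x g h|); first by rewrite subr_gt0 nv.
  by rewrite addrC subrK.
exists eta => // w wa vw; split=> // g h Egh.
have chart_close : `|edge_coord (a, w) g h - edge_coord (a, v) g h| < eta.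
  by rewrite /edge_coord /=; case: ifP.
apply: le_lt_trans (ler_distD (edge_coord (a, v) g h) _ _) _.
by move: (slack (g, h) Egh) => /=; lra.
Qed.

Lemma corr_ge_local_of_closure S P S' P' x : is_corr E S P -> is_corr E S' P' ->
  stratum R E S' P' x -> Lclosure E (stratum R E S P) x -> corr_ge_local E S P S' P'.
Proof.
move=> [_ partP _] [_ partP' _] sx [vx closure].
have [U Uopen [Ux stable]] := sign_stable_nbhd vx.
have [y [vy Uy sy]] := closure U Uopen Ux.
have [yx_charts yx_pos] := stable y Uy.
have [_ inS _] := sy; have [_ inS' _] := sx.
have SS' : {subset S <= S'} by move=> a /inS /yx_charts /inS'.
split=> // a b Eab aS bS' eq_ab.
have x_pos : 0 < edge_coord x a b.
  exact/(rst_contracted_gt0 Eab)/(stratum_pblock partP' sx (SS' _ aS) bS').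
have y_pos := yx_pos _ _ Eab x_pos.
have bS : b \in S by apply/inS; exact: inL_edge ((inS a).1 aS) Eab (ltW y_pos).
split=> //; apply/(stratum_pblock partP sy aS bS)/rst_step/contractedE.
by split=> //; apply/inS.
Qed.

Lemma closure_of_corr_ge_local S P S' P' x : is_corr E S P -> is_corr E S' P' ->
  corr_ge_local E S P S' P' -> stratum R E S' P' x -> Lclosure E (stratum R E S P) x.
Proof.
move=> hp [_ partP' _] [SS' loc] sx; have [vx inS' _] := sx.
have [[/set0Pn [a aS] _] _ _] := hp.
have xS' g : g \in S' -> inL E x g := fun gS => (inS' g).1 gS.
have pos_pblock g h : E g h -> g \in S' -> h \in S' -> 0 < edge_coord x g h ->
    pblock P' g = pblock P' h.
  move=> Egh gS hS gh_pos; apply/(stratum_pblock partP' sx gS hS)/rst_step/contractedE.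
  by split=> //; apply: xS'.
apply: (closure_of_weak_signs hp vx aS (xS' _ (SS' _ aS))) => g h Egh gS hS.
- by move=> _; apply: edge_coord_ge0 Egh; apply: xS'; apply: SS'.
- move=> neq_gh; apply/eqP.
  rewrite eq_le (edge_coord_ge0 (xS' _ (SS' _ gS)) (xS' _ (SS' _ hS)) Egh) andbT leNgt.
  apply: contra neq_gh => gh_pos.
  have := pos_pblock g h Egh (SS' _ gS) (SS' _ hS) gh_pos.
  by case/(loc g h Egh gS (SS' _ hS)) => _ ->.
- rewrite leNgt; apply: contra hS => gh_pos.
  have hS' : h \in S' by apply/inS'; exact: inL_edge (xS' _ (SS' _ gS)) Egh (ltW gh_pos).
  by case: (loc g h Egh gS hS' (pos_pblock g h Egh (SS' _ gS) hS' gh_pos)).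
Qed.

End Arboreal.
End Tree.

Theorem proposition2p18 (R : realType) (T : finType) (E : rel T)
    (hT : is_tree E)
    (S : {set T}) (P : {set {set T}}) (S' : {set T}) (P' : {set {set T}})
    (hp : is_corr E S P) (hp' : is_corr E S' P') :
  (corr_ge E S P S' P' <->
     exists x, stratum R E S' P' x /\ Lclosure E (stratum R E S P) x) /\
  (corr_ge E S P S' P' ->
     forall x, stratum R E S' P' x -> Lclosure E (stratum R E S P) x).
Proof.
have ge_closure : corr_ge E S P S' P' ->
    forall x, stratum R E S' P' x -> Lclosure E (stratum R E S P) x.
  by move=> /(corr_geP hp hp') loc x /(closure_of_corr_ge_local hT hp hp' loc).
split=> //; split=> [ge|[x [sx closure]]].
  have [x sx] := stratum_exists hT R hp'.
  by exists x; split=> //; apply: ge_closure.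
by apply/(corr_geP hp hp'); apply: (corr_ge_local_of_closure hT hp hp' sx closure).
Qed.
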